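(* Under the hypotheses of the two preceding theorems (discrepancy principle with fixed $1<\underline\tau\le\overline\tau<\infty$, $\varphi^\dagger$ satisfying the VSC with $\sigma\in(0,1]$ and a concave increasing index function $\Psi$), $$D^{\mathrm{sym}}_J(\varphi^\delta_{\alpha(\delta,f^\delta)},\varphi^\dagger)=\mathcal O(\Psi(\delta))\quad\text{as }\delta\to0.$$
   Context: $\mathcal V$ Banach, $\mathcal H$ Hilbert, $\mathcal T:\mathcal V\to\mathcal H$ bounded linear injective compact; $J:\mathcal V\to[0,\infty)$ convex; Bregman distance $D_J(u,u^* )=J(u)-J(u^* )-\langle p,u-u^*\rangle$ for $p\in\partial J(u^* )$, and symmetric Bregman distance $D_J^{\mathrm{sym}}(u,u^* )=D_J(u,u^* )+D_J(u^*,u)$; here $D_J(\varphi^\dagger,\varphi^\delta_\alpha)$ uses the subgradient $\frac1\alpha\mathcal T^*(f^\delta-\mathcal T\varphi^\delta_\alpha)\in\partial J(\varphi^\delta_\alpha)$. Noise level $\delta>0$, $\|f^\dagger-f^\delta\|\le\delta$; $\varphi^\delta_\alpha$ minimizes $\frac12\|\mathcal T\varphi-f^\delta\|^2+\alpha J(\varphi)$; $\varphi^\dagger$ is a $J$-minimizing solution of $\mathcal T\varphi=f^\dagger$. Discrepancy principle: $\underline\tau\delta\le\|\mathcal T\varphi^\delta_{\alpha(\delta,f^\delta)}-f^\delta\|\le\overline\tau\delta$. VSC: there exist $\sigma\in(0,1]$ and a concave index function $\Psi$ (continuous, increasing, $\Psi(0)=0$) with $\frac\sigma2D_J(\varphi,\varphi^\dagger)\le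 J(\varphi)-J(\varphi^\dagger)+\Psi(\|\mathcal T\varphi-\mathcal T\varphi^\dagger\|)$ for all $\varphi$. *)

From Stdlib Require Import Reals Lra.
Open Scope R_scope.

Definition vs_axioms (V : Type) (zero : V) (add : V -> V -> V) (opp : V -> V)
  (scal : R -> V -> V) : Prop :=
  (forall x y z, add x (add y z) = add (add x y) z) /\
  (forall x y, add x y = add y x) /\
  (forall x, add x zero = x) /\
  (forall x, add x (opp x) = zero) /\
  (forall a b x, scal a (scal b x) = scal (a * b) x) /\
  (forall x, scal 1 x = x) /\
  (forall a x y, scal a (add x y) = add (scal a x) (scal a y)) /\
  (forall a b x, scal (a + b) x = add (scal a x) (scal b x)).

Definition complete_wrt (V : Type) (add : V -> V -> V) (opp : V -> V)
  (norm : V -> R) : Prop :=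
  forall u : nat -> V,
    (forall eps, 0 < eps -> exists N, forall m n, (N <= m)%nat -> (N <= n)%nat ->
        norm (add (u m) (opp (u n))) < eps) ->
    exists l, forall eps, 0 < eps -> exists N, forall n, (N <= n)%nat ->
        norm (add (u n) (opp l)) < eps.

Record Banach := {
  bcar :> Type;
  bzero : bcar;
  badd : bcar -> bcar -> bcar;
  bopp : bcar -> bcar;
  bscal : R -> bcar -> bcar;
  bnorm : bcar -> R;
  b_vs : vs_axioms bcar bzero badd bopp bscal;
  b_norm_def : forall x, bnorm x = 0 -> x = bzero;
  b_norm_hom : forall a x, bnorm (bscal a x) = Rabs a * bnorm x;
  b_norm_tri : forall x y, bnorm (badd x y) <= bnorm x + bnorm y;
  b_complete : complete_wrt bcar badd bopp bnorm
}.

Definition bsub (V : Banach) (x y : V) : V := badd V x (bopp V y).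

Record Hilbert := {
  hcar :> Type;
  hzero : hcar;
  hadd : hcar -> hcar -> hcar;
  hopp : hcar -> hcar;
  hscal : R -> hcar -> hcar;
  hinner : hcar -> hcar -> R;
  h_vs : vs_axioms hcar hzero hadd hopp hscal;
  h_inner_sym : forall x y, hinner x y = hinner y x;
  h_inner_add : forall x y z, hinner (hadd x y) z = hinner x z + hinner y z;
  h_inner_scal : forall a x y, hinner (hscal a x) y = a * hinner x y;
  h_inner_pos : forall x, 0 <= hinner x x;
  h_inner_def : forall x, hinner x x = 0 -> x = hzero;
  h_complete : complete_wrt hcar hadd hopp (fun x => sqrt (hinner x x))
}.

Definition hnorm (H : Hilbert) (x : H) : R := sqrt (hinner H x x).
Definition hsub (H : Hilbert) (x y : H) : H := hadd H x (hopp H y).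

Definition is_linear (V : Banach) (H : Hilbert) (T : V -> H) : Prop :=
  (forall x y, T (badd V x y) = hadd H (T x) (T y)) /\
  (forall a x, T (bscal V a x) = hscal H a (T x)).

Definition is_bounded_op (V : Banach) (H : Hilbert) (T : V -> H) : Prop :=
  exists M, forall x, hnorm H (T x) <= M * bnorm V x.

Definition is_compact_op (V : Banach) (H : Hilbert) (T : V -> H) : Prop :=
  forall u : nat -> V, (exists M, forall n, bnorm V (u n) <= M) ->
    exists (phi : nat -> nat) (l : H),
      (forall n, (phi n < phi (S n))%nat) /\
      (forall eps, 0 < eps -> exists N, forall n, (N <= n)%nat ->
          hnorm H (hsub H (T (u (phi n))) l) < eps).

Definition in_dual (V : Banach) (p : V -> R) : Prop :=
  (forall x y, p (badd V x y) = p x + p y) /\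
  (forall a x, p (bscal V a x) = a * p x) /\
  (exists M, forall x, Rabs (p x) <= M * bnorm V x).

Definition adjoint_app (V : Banach) (H : Hilbert) (T : V -> H) (g : H) : V -> R :=
  fun v => hinner H g (T v).

Definition convex_fun (V : Banach) (J : V -> R) : Prop :=
  forall x y t, 0 <= t <= 1 ->
    J (badd V (bscal V t x) (bscal V (1 - t) y)) <= t * J x + (1 - t) * J y.

Definition subgradient (V : Banach) (J : V -> R) (u : V) (p : V -> R) : Prop :=
  in_dual V p /\ forall w, J w >= J u + p (bsub V w u).

Definition bregman (V : Banach) (J : V -> R) (p : V -> R) (u ustar : V) : R :=
  J u - J ustar - p (bsub V u ustar).

Definition concave_index_function (Psi : R -> R) : Prop :=
  Psi 0 = 0 /\
  (forall x y, 0 <= x -> x < y -> Psi x < Psi y) /\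
  (forall x, 0 <= x -> forall eps, 0 < eps -> exists d, 0 < d /\
      forall y, 0 <= y -> Rabs (y - x) < d -> Rabs (Psi y - Psi x) < eps) /\
  (forall x y t, 0 <= x -> 0 <= y -> 0 <= t <= 1 ->
      t * Psi x + (1 - t) * Psi y <= Psi (t * x + (1 - t) * y)).

Definition tikhonov_minimizer (V : Banach) (H : Hilbert) (T : V -> H) (J : V -> R)
  (fd : H) (alpha : R) (phi : V) : Prop :=
  forall psi, / 2 * (hnorm H (hsub H (T phi) fd)) ^ 2 + alpha * J phi
              <= / 2 * (hnorm H (hsub H (T psi) fd)) ^ 2 + alpha * J psi.

Definition J_minimizing_solution (V : Banach) (H : Hilbert) (T : V -> H) (J : V -> R)
  (f : H) (phi : V) : Prop :=
  T phi = f /\ forall psi, T psi = f -> J phi <= J psi.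

(** The Bregman distance with the subgradient at the regularized solution is at
    most [J phidag - J phi], because the discrepancy principle makes the residual
    dominate the noise, so [<f - T phi, f_dag - T phi> >= 0] by the law of cosines.
    The same domination gives [J phi <= J phidag] by comparing Tikhonov functionals.
    Adding the variational source condition then bounds the symmetric Bregman
    distance by [(2/sigma) Psi(|T phi - f_dag|)], and [|T phi - f_dag| <= k delta]
    with [k = 2 (tau_hi + 1)], while concavity with [Psi 0 = 0] gives
    [Psi (k delta) <= k Psi delta]. *)

From Stdlib Require Import Reals Lra.
Open Scope R_scope.

Section VectorSpace.

Variables (X : Type) (zero : X) (add : X -> X -> X) (opp : X -> X)
  (scal : R -> X -> X).
Hypothesis HX : vs_axioms X zero add opp scal.

Lemma vs_idem_zero a : add a a = a -> a = zero.
Proof.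
  destruct HX as [Hassoc [_ [Hzero [Hopp _]]]]. intros Ha.
  rewrite <- (Hopp a). pattern a at 2. rewrite <- Ha.
  rewrite <- Hassoc, Hopp, Hzero. reflexivity.
Qed.

Lemma vs_opp_unique a b : add a b = zero -> b = opp a.
Proof.
  destruct HX as [Hassoc [Hcomm [Hzero [Hopp _]]]]. intros Hab.
  rewrite <- (Hzero b), <- (Hopp a), Hassoc, (Hcomm b a), Hab, Hcomm, Hzero.
  reflexivity.
Qed.

End VectorSpace.

Section LinearOperator.

Variables (V : Banach) (H : Hilbert) (T : V -> H).
Hypothesis HT : is_linear V H T.

Lemma linear_zero : T (bzero V) = hzero H.
Proof.
  apply (vs_idem_zero _ _ _ _ _ (h_vs H)).
  destruct HT as [Hadd _]. destruct (b_vs V) as [_ [_ [Hzero _]]].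
  rewrite <- Hadd, Hzero. reflexivity.
Qed.

Lemma linear_opp x : T (bopp V x) = hopp H (T x).
Proof.
  apply (vs_opp_unique _ _ _ _ _ (h_vs H)).
  destruct HT as [Hadd _]. destruct (b_vs V) as [_ [_ [_ [Hopp _]]]].
  rewrite <- Hadd, Hopp. exact linear_zero.
Qed.

Lemma linear_sub x y : T (bsub V x y) = hsub H (T x) (T y).
Proof.
  unfold bsub, hsub. destruct HT as [Hadd _]. rewrite Hadd, linear_opp. reflexivity.
Qed.

End LinearOperator.

Section InnerProduct.

Variable H : Hilbert.

Lemma hinner_zero_l z : hinner H (hzero H) z = 0.
Proof.
  destruct (h_vs H) as [_ [_ [Hzero _]]].
  pose proof (h_inner_add H (hzero H) (hzero H) z) as E.
  rewrite Hzero in E. lra.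
Qed.

Lemma hinner_opp_l x z : hinner H (hopp H x) z = - hinner H x z.
Proof.
  destruct (h_vs H) as [_ [_ [_ [Hopp _]]]].
  pose proof (h_inner_add H x (hopp H x) z) as E.
  rewrite Hopp, hinner_zero_l in E. lra.
Qed.

Lemma hinner_sub_l x y z : hinner H (hsub H x y) z = hinner H x z - hinner H y z.
Proof. unfold hsub. rewrite h_inner_add, hinner_opp_l. lra. Qed.

Lemma hinner_sub_r x y z : hinner H z (hsub H x y) = hinner H z x - hinner H z y.
Proof. rewrite !(h_inner_sym H z), hinner_sub_l. reflexivity. Qed.

Lemma hinner_add_r x y z : hinner H z (hadd H x y) = hinner H z x + hinner H z y.
Proof. rewrite !(h_inner_sym H z), h_inner_add. reflexivity. Qed.

Lemma hinner_sub_sub x y z w :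
  hinner H (hsub H x y) (hsub H z w)
  = hinner H x z - hinner H x w - hinner H y z + hinner H y w.
Proof. rewrite hinner_sub_l, !hinner_sub_r. lra. Qed.

Lemma hnorm_nonneg x : 0 <= hnorm H x.
Proof. apply sqrt_pos. Qed.

Lemma hnorm_sqr x : hnorm H x ^ 2 = hinner H x x.
Proof. apply pow2_sqrt, h_inner_pos. Qed.

Lemma hnorm_sub_comm x y : hnorm H (hsub H x y) = hnorm H (hsub H y x).
Proof.
  unfold hnorm. f_equal. rewrite !hinner_sub_sub, (h_inner_sym H x y). lra.
Qed.

Lemma hinner_ge_sqr_sum u v : - (hnorm H u ^ 2 + hnorm H v ^ 2) <= 2 * hinner H u v.
Proof.
  pose proof (h_inner_pos H (hadd H u v)) as Huv.
  rewrite h_inner_add, !hinner_add_r, (h_inner_sym H v u) in Huv.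
  rewrite !hnorm_sqr. lra.
Qed.

Lemma law_of_cosines x y z :
  2 * hinner H (hsub H x y) (hsub H z y)
  = hnorm H (hsub H x y) ^ 2 + hnorm H (hsub H z y) ^ 2 - hnorm H (hsub H z x) ^ 2.
Proof.
  rewrite !hnorm_sqr, !hinner_sub_sub,
    (h_inner_sym H z x), (h_inner_sym H y x), (h_inner_sym H z y).
  lra.
Qed.

Lemma hnorm_sub_le_twice x y z :
  hnorm H (hsub H x z) <= 2 * (hnorm H (hsub H x y) + hnorm H (hsub H y z)).
Proof.
  pose proof (law_of_cosines x y z) as Hcos.
  pose proof (hinner_ge_sqr_sum (hsub H x y) (hsub H z y)) as Hlow.
  rewrite (hnorm_sub_comm z x) in Hcos. rewrite (hnorm_sub_comm z y) in Hcos, Hlow.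
  pose proof (hnorm_nonneg (hsub H x z)).
  pose proof (hnorm_nonneg (hsub H x y)).
  pose proof (hnorm_nonneg (hsub H y z)).
  nra.
Qed.

Lemma hinner_residual_nonneg x y z :
  hnorm H (hsub H z x) <= hnorm H (hsub H y x) ->
  0 <= hinner H (hsub H x y) (hsub H z y).
Proof.
  intros Hzx. pose proof (law_of_cosines x y z) as Hcos.
  rewrite (hnorm_sub_comm x y) in Hcos.
  pose proof (hnorm_nonneg (hsub H z x)).
  assert (hnorm H (hsub H z x) ^ 2 <= hnorm H (hsub H y x) ^ 2) by (apply pow_incr; lra).
  pose proof (pow2_ge_0 (hnorm H (hsub H z y))).
  lra.
Qed.

End InnerProduct.

Section IndexFunction.

Variable Psi : R -> R.
Hypothesis HPsi : concave_index_function Psi.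

Lemma index_le x y : 0 <= x <= y -> Psi x <= Psi y.
Proof.
  destruct HPsi as [_ [Hmono _]]. intros [Hx Hxy].
  destruct (Req_dec x y) as [->|Hne]; [lra|]. left. apply Hmono; lra.
Qed.

(* Concavity between [0] and [k t], with weight [1/k] on [k t]. *)
Lemma index_scale_le k t : 1 <= k -> 0 <= t -> Psi (k * t) <= k * Psi t.
Proof.
  destruct HPsi as [H0 [_ [_ Hconc]]]. intros Hk Ht.
  assert (Hw : 0 <= / k <= 1).
  { split; [left; apply Rinv_0_lt_compat; lra|].
    rewrite <- Rinv_1. apply Rinv_le_contravar; lra. }
  pose proof (Hconc (k * t) 0 (/ k) ltac:(nra) (Rle_refl 0) Hw) as Hc.
  replace (/ k * (k * t) + (1 - / k) * 0) with t in Hc by (field; lra).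
  rewrite H0 in Hc.
  apply (Rmult_le_reg_l (/ k)); [apply Rinv_0_lt_compat; lra|].
  replace (/ k * (k * Psi t)) with (Psi t) by (field; lra). lra.
Qed.

Lemma index_le_scale x k t : 1 <= k -> 0 <= t -> 0 <= x <= k * t -> Psi x <= k * Psi t.
Proof.
  intros Hk Ht Hx. apply Rle_trans with (Psi (k * t));
    [apply index_le | apply index_scale_le]; lra.
Qed.

End IndexFunction.

Section Tikhonov.

Variables (V : Banach) (H : Hilbert) (T : V -> H) (J : V -> R).

Lemma tikhonov_J_le fd alpha phi psi :
  0 < alpha -> tikhonov_minimizer V H T J fd alpha phi ->
  hnorm H (hsub H (T psi) fd) <= hnorm H (hsub H (T phi) fd) ->
  J phi <= J psi.
Proof.
  intros Halpha Hmin Hres. specialize (Hmin psi).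
  pose proof (hnorm_nonneg H (hsub H (T psi) fd)).
  assert (hnorm H (hsub H (T psi) fd) ^ 2 <= hnorm H (hsub H (T phi) fd) ^ 2)
    by (apply pow_incr; lra).
  nra.
Qed.

Lemma bregman_adjoint_le (HT : is_linear V H T) alpha f u w :
  0 < alpha -> 0 <= hinner H (hsub H f (T w)) (hsub H (T u) (T w)) ->
  bregman V J (fun v => / alpha * adjoint_app V H T (hsub H f (T w)) v) u w
  <= J u - J w.
Proof.
  intros Halpha Hpair. unfold bregman, adjoint_app. rewrite linear_sub by exact HT.
  assert (0 <= / alpha * hinner H (hsub H f (T w)) (hsub H (T u) (T w))).
  { apply Rmult_le_pos; [left; apply Rinv_0_lt_compat|]; lra. }
  lra.
Qed.

Lemma sym_bregman_le_index (HT : is_linear V H T) (Psi : R -> R) sigma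
  phidag pdag fd alpha phi :
  0 < sigma <= 1 -> 0 < alpha ->
  tikhonov_minimizer V H T J fd alpha phi ->
  hnorm H (hsub H (T phidag) fd) <= hnorm H (hsub H (T phi) fd) ->
  sigma / 2 * bregman V J pdag phi phidag
    <= J phi - J phidag + Psi (hnorm H (hsub H (T phi) (T phidag))) ->
  bregman V J pdag phi phidag
    + bregman V J (fun v => / alpha * adjoint_app V H T (hsub H fd (T phi)) v) phidag phi
  <= 2 / sigma * Psi (hnorm H (hsub H (T phi) (T phidag))).
Proof.
  intros Hsigma Halpha Hmin Hres HVSC.
  pose proof (tikhonov_J_le fd alpha phi phidag Halpha Hmin Hres) as HJ.
  pose proof (bregman_adjoint_le HT alpha fd phidag phi Halpha
    (hinner_residual_nonneg H fd (T phi) (T phidag) Hres)) as HD2.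
  set (D1 := bregman V J pdag phi phidag) in *.
  set (P := Psi (hnorm H (hsub H (T phi) (T phidag)))) in *.
  assert (HD1 : D1 <= 2 / sigma * (J phi - J phidag + P)).
  { apply (Rmult_le_reg_l (sigma / 2)); [lra|].
    replace (sigma / 2 * (2 / sigma * (J phi - J phidag + P)))
      with (J phi - J phidag + P) by (field; lra).
    lra. }
  assert (1 <= 2 / sigma).
  { apply (Rmult_le_reg_l sigma); [lra|].
    replace (sigma * (2 / sigma)) with 2 by (field; lra). lra. }
  nra.
Qed.

End Tikhonov.

Theorem mainTheorem9
  (V : Banach) (H : Hilbert) (T : V -> H) (J : V -> R)
  (HTlin : is_linear V H T) (HTbd : is_bounded_op V H T)
  (HTinj : forall x y, T x = T y -> x = y) (HTcomp : is_compact_op V H T)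
  (HJconv : convex_fun V J) (HJnn : forall x, 0 <= J x)
  (fdag : H) (phidag : V) (Hdag : J_minimizing_solution V H T J fdag phidag)
  (pdag : V -> R) (Hpdag : subgradient V J phidag pdag)
  (tau_lo tau_hi : R) (Htau : 1 < tau_lo <= tau_hi)
  (sigma : R) (Hsigma : 0 < sigma <= 1)
  (Psi : R -> R) (HPsi : concave_index_function Psi)
  (HVSC : forall phi, sigma / 2 * bregman V J pdag phi phidag
                      <= J phi - J phidag + Psi (hnorm H (hsub H (T phi) (T phidag)))) :
  exists C delta0, 0 < delta0 /\
    forall delta fd alpha phi,
      0 < delta < delta0 ->
      hnorm H (hsub H fdag fd) <= delta ->
      0 < alpha ->
      tikhonov_minimizer V H T J fd alpha phi ->
      tau_lo * delta <= hnorm H (hsub H (T phi) fd) <= tau_hi * delta ->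
      bregman V J pdag phi phidag
        + bregman V J (fun v => / alpha * adjoint_app V H T (hsub H fd (T phi)) v) phidag phi
        <= C * Psi delta.
Proof.
  set (k := 2 * (tau_hi + 1)).
  exists (2 / sigma * k), 1. split; [lra|].
  intros delta fd alpha phi Hdelta Hnoise Halpha Hmin Hdiscr.
  destruct Hdag as [HTdag _].
  assert (Hres : hnorm H (hsub H (T phidag) fd) <= hnorm H (hsub H (T phi) fd)).
  { rewrite HTdag. assert (delta <= tau_lo * delta) by nra. lra. }
  assert (Herr : 0 <= hnorm H (hsub H (T phi) (T phidag)) <= k * delta).
  { split; [apply hnorm_nonneg|].
    pose proof (hnorm_sub_le_twice H (T phi) fd (T phidag)) as Htri.
    rewrite (hnorm_sub_comm H fd), HTdag in Htri. rewrite HTdag.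
    replace (k * delta) with (2 * (tau_hi * delta + delta)) by (unfold k; ring).
    lra. }
  pose proof (index_le_scale Psi HPsi _ k delta ltac:(unfold k; lra) ltac:(lra) Herr).
  assert (0 < 2 / sigma) by (apply Rdiv_lt_0_compat; lra).
  eapply Rle_trans; [exact (sym_bregman_le_index V H T J HTlin Psi sigma phidag pdag
                        fd alpha phi Hsigma Halpha Hmin Hres (HVSC phi))|].
  rewrite Rmult_assoc. apply Rmult_le_compat_l; lra.
Qed.
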